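(* For $n\ge1$, $\lambda\in\mathbb J_n$ and $\mu\in\mathbb J_{n+1}$, $$1_{(\lambda\prec\mu)}=\det[\phi_n(\widetilde\lambda_i,\widetilde\mu_j)]_{i,j=1}^{r_{n+1}}\times\begin{cases}2^{-r_{n+1}},&n\text{ even},\\1,&n\text{ odd}.\end{cases}$$
   Context: $r_n=\lfloor(n+1)/2\rfloor$; $\mathbb J_n$ is the set of partitions $\lambda=(\lambda_1\ge\dots\ge\lambda_{r_n}\ge0)$ of integers, with the convention $\lambda_i=0$ for $i>r_n$. $\widetilde\lambda_i=\lambda_i+r_n-i$ for $\lambda\in\mathbb J_n$ (so if $n$ is even, $\widetilde\lambda_{r_{n+1}}=\widetilde\lambda_{r_n+1}=-1$), and $\widetilde\mu_j=\mu_j+r_{n+1}-j$ for $\mu\in\mathbb J_{n+1}$. $\lambda\prec\mu$ means $\mu_1\ge\lambda_1\ge\mu_2\ge\lambda_2\ge\dots\ge\mu_{r_n}\ge\lambda_{r_n}\ge\mu_{r_n+1}$. $\phi_n(s,t)=2\cdot1_{(s<t)}$ if $n$ even and $1_{(s\le t)}$ if $n$ odd. *)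

From mathcomp Require Import all_boot all_order all_algebra.
Set Implicit Arguments. Unset Strict Implicit. Unset Printing Implicit Defensive.
Import Order.TTheory GRing.Theory Num.Theory.
Local Open Scope ring_scope.

Definition rn (n : nat) : nat := (n.+1)./2.

(* A partition with r parts lambda_1 >= ... >= lambda_r >= 0, stored
   0-based as a function 'I_r -> nat. *)
Definition is_part (r : nat) (lam : 'I_r -> nat) : Prop :=
  forall i j : 'I_r, (i <= j)%N -> (lam j <= lam i)%N.

(* 1-based access with the convention lambda_i = 0 for i > r (and i = 0). *)
Definition pe (r : nat) (lam : 'I_r -> nat) (i : nat) : nat :=
  match i with
  | 0 => 0%N
  | k.+1 => if insub k is Some j then lam j else 0%N
  end.

Definition ptilde (r : nat) (lam : 'I_r -> nat) (i : nat) : int :=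
  (pe lam i)%:Z + r%:Z - i%:Z.

Definition interlace (n : nat) (lam : 'I_(rn n) -> nat)
    (mu : 'I_(rn n.+1) -> nat) : bool :=
  [forall i : 'I_(rn n),
     (pe lam i.+1 <= pe mu i.+1)%N && (pe mu i.+2 <= pe lam i.+1)%N].

Definition phi (n : nat) (s t : int) : rat :=
  if odd n then ((s <= t)%R : bool)%:R else 2 * (((s < t)%R : bool)%:R).

From mathcomp Require Import all_boot all_order all_algebra zify.
Set Implicit Arguments. Unset Strict Implicit. Unset Printing Implicit Defensive.
Import Order.TTheory GRing.Theory Num.Theory.
Local Open Scope ring_scope.

(* With x_i = tilde-lambda_(i+1) and y_j = tilde-mu_(j+1) + [n odd], the entry
   phi_n is c * 1(x_i < y_j), where c = 1 for n odd and c = 2 for n even, so the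
   determinant is c^(r_(n+1)) det[1(x_i < y_j)].  For nonincreasing x and y this
   0/1 determinant is 1 if y_0 > x_0 >= y_1 > x_1 >= ... and 0 otherwise:
   expanding along the last column, either that column vanishes (x_m >= y_m),
   or the last two rows are both all ones (x_(m-1) < y_m), or the column is the
   last unit vector and we recurse on the leading minor.  The chain of
   inequalities is exactly the interlacing of lambda and mu, shifted. *)

Section LtMatrix.
Variables (d : Order.disp_t) (T : orderType d) (R : comNzRingType).
Variables x y : nat -> T.

Definition lt_matrix m : 'M[R]_m := \matrix_(i, j) ((x i < y j)%O%:R).

Definition lt_interlaced m : bool :=
  all (fun i => (x i < y i)%O && ((0 < i)%N ==> (y i <= x i.-1)%O)) (iota 0 m).

Lemma lt_interlacedS m : lt_interlaced m.+1 =
  [&& lt_interlaced m, (x m < y m)%O & (0 < m)%N ==> (y m <= x m.-1)%O].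
Proof. by rewrite /lt_interlaced -[m.+1]addn1 iotaD all_cat /= andbT. Qed.

Lemma lt_interlacedP m : reflect
  (forall i, (i < m)%N -> (x i < y i)%O && ((0 < i)%N ==> (y i <= x i.-1)%O))
  (lt_interlaced m).
Proof.
apply: (iffP allP) => H i; last by rewrite mem_iota => /H.
by move=> lt_im; apply: H; rewrite mem_iota.
Qed.

Hypotheses (x_noninc : {homo x : i j / (i <= j)%N >-> (j <= i)%O})
           (y_noninc : {homo y : i j / (i <= j)%N >-> (j <= i)%O}).

Lemma det_lt_matrix m : \det (lt_matrix m) = (lt_interlaced m)%:R.
Proof.
elim: m => [|m IH]; first by rewrite det_mx00.
rewrite lt_interlacedS (expand_det_col _ ord_max).
have [ym_le_xm | xm_lt_ym] := leP (y m) (x m).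
  rewrite big1 ?andbF // => i _; rewrite mxE.
  by rewrite ltNge (le_trans ym_le_xm (x_noninc (leq_ord i))) mul0r.
case: m IH xm_lt_ym => [|k] IH xk1_lt_yk1.
  by rewrite big_ord1 mxE xk1_lt_yk1 /cofactor det_mx00 !mulr1.
have [yk1_le_xk | xk_lt_yk1] := leP (y k.+1) (x k).
  rewrite (bigD1 ord_max) //= big1 ?addr0; last first.
    move=> i ne_i_max.
    have le_ik : (i <= k)%N by rewrite -ltnS ltn_neqAle -ltnS ltn_ord andbT.
    by rewrite mxE ltNge (le_trans yk1_le_xk (x_noninc le_ik)) mul0r.
  rewrite mxE xk1_lt_yk1 mul1r andbT /cofactor -IH addnn -muln2 mulnC exprM.
  rewrite sqrrN !expr1n mul1r; congr (\det _).
  by apply/matrixP => i j; rewrite !mxE !lift_max.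
rewrite -expand_det_col (@determinant_alternate _ _ _ (inord k) ord_max).
- by rewrite !andbF.
- by rewrite -val_eqE /= inordK // neq_ltn ltnSn.
move=> j; rewrite !mxE inordK //.
have xk_lt_yj : (x k < y j)%O.
  by apply: lt_le_trans xk_lt_yk1 (y_noninc _); rewrite -ltnS.
by rewrite xk_lt_yj (le_lt_trans (x_noninc (leqnSn k)) xk_lt_yj).
Qed.
End LtMatrix.

Arguments lt_matrix {d T R} x y m.
Arguments det_lt_matrix {d T R x y}.

Lemma pe_eq0 r (lam : 'I_r -> nat) i : (r < i)%N -> pe lam i = 0%N.
Proof. by case: i => [|k] //= lt_rk; rewrite insubN // -leqNgt -ltnS. Qed.

Lemma pe_nonincreasing r (lam : 'I_r -> nat) : is_part lam ->
  {homo (fun i => pe lam i.+1) : i j / (i <= j)%N >-> (j <= i)%N}.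
Proof.
move=> lam_part i j le_ij /=.
case: insubP => [a _ aj|]; case: insubP => [b _ bi|] //=.
- by apply: lam_part; rewrite aj bi.
- by rewrite -ltnNge => lt_ri; have := ltn_ord a; rewrite aj; lia.
Qed.

Lemma ptilde_nonincreasing r (lam : 'I_r -> nat) : is_part lam ->
  {homo (fun i => ptilde lam i.+1) : i j / (i <= j)%N >-> j <= i}.
Proof.
move=> /pe_nonincreasing pe_noninc i j le_ij.
by have := pe_noninc _ _ le_ij; rewrite /ptilde; lia.
Qed.

Lemma rnS n : rn n.+1 = (rn n + ~~ odd n)%N.
Proof. by rewrite /rn /= uphalf_half; case: (odd n); rewrite /= ?addn0 ?addn1. Qed.

Lemma phiE n s t :
  phi n s t = (if odd n then 1 else 2) * ((s < t + (odd n)%:Z)%R : bool)%:R.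
Proof. by rewrite /phi; case: (odd n); rewrite ?mul1r ?addr0 ?ltzD1. Qed.

Lemma interlaceP n (lam : 'I_(rn n) -> nat) (mu : 'I_(rn n.+1) -> nat) :
  reflect (forall i, (i < rn n)%N ->
             (pe lam i.+1 <= pe mu i.+1)%N && (pe mu i.+2 <= pe lam i.+1)%N)
          (interlace lam mu).
Proof.
by apply: (iffP forallP) => H i; [move=> lt_irn; apply: (H (Ordinal lt_irn)) | apply: H].
Qed.

Lemma interlace_lt_interlaced n (lam : 'I_(rn n) -> nat) (mu : 'I_(rn n.+1) -> nat) :
  interlace lam mu = lt_interlaced (fun i => ptilde lam i.+1)
                       (fun j => ptilde mu j.+1 + (odd n)%:Z) (rn n.+1).
Proof.
have rn_S := rnS n; have odd_or_even : (odd n + ~~ odd n = 1)%N by case: odd.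
have lam0 := @pe_eq0 _ lam; have mu0 := @pe_eq0 _ mu; rewrite /ptilde.
apply/interlaceP/lt_interlacedP => H i lt_i; apply/andP; split.
- have [lt_irn | ge_irn] := ltnP i (rn n).
    by have /andP[le_lm _] := H i lt_irn; lia.
  by rewrite lam0; lia.
- case: i lt_i => // k lt_kS.
  by have /andP[_ le_ml] := H k ltac:(lia); rewrite succnK; lia.
- by have /andP[lt_xy _] := H i ltac:(lia); lia.
- have [lt_iS | ge_iS] := ltnP i.+1 (rn n.+1).
    by have /andP[_] := H i.+1 lt_iS; rewrite succnK; lia.
  by rewrite mu0; lia.
Qed.

Theorem lemma3p2 (n : nat) (hn : (1 <= n)%N)
    (lam : 'I_(rn n) -> nat) (mu : 'I_(rn n.+1) -> nat)
    (hlam : is_part lam) (hmu : is_part mu) :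
  ((interlace lam mu)%:R : rat) =
    \det (\matrix_(i < rn n.+1, j < rn n.+1)
            phi n (ptilde lam i.+1) (ptilde mu j.+1))
    * (if odd n then 1 else (2 ^- (rn n.+1) : rat)).
Proof.
set x := fun i => ptilde lam i.+1.
set y := fun j => ptilde mu j.+1 + (odd n)%:Z.
have -> : \matrix_(i < rn n.+1, j < rn n.+1) phi n (ptilde lam i.+1) (ptilde mu j.+1)
          = (if odd n then 1 else 2) *: lt_matrix x y (rn n.+1).
  by apply/matrixP => i j; rewrite !mxE phiE.
have y_noninc : {homo y : i j / (i <= j)%N >-> j <= i}.
  by move=> i j /(ptilde_nonincreasing hmu); rewrite lerD2r.
rewrite detZ (det_lt_matrix (ptilde_nonincreasing hlam) y_noninc).
rewrite -interlace_lt_interlaced.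
by case: (odd n); rewrite ?expr1n ?mul1r ?mulr1 // mulrC mulrA mulVf ?mul1r ?expf_neq0.
Qed.
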